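(* Let $G$ and $H$ be finite simple graphs with $\gamma_{sR}(G)\geq 0$ and $\gamma_{sR}(H)\geq 0$. Then $\gamma_{sR}(G\vee H)\leq \gamma_{sR}(G)+\gamma_{sR}(H)$.
   Context: For a graph $G=(V,E)$ and $x\in V$, $N_G[x]=\{x\}\cup\{y: xy\in E\}$. A signed Roman dominating function (SRDF) on $G$ is a function $f:V\to\{-1,1,2\}$ such that (a) $\sum_{y\in N_G[x]}f(y)\geq 1$ for every $x\in V$, and (b) every vertex $x$ with $f(x)=-1$ is adjacent to at least one vertex $y$ with $f(y)=2$. The weight of $f$ is $\sum_{x\in V}f(x)$, and $\gamma_{sR}(G)$ is the minimum weight of an SRDF on $G$. The join $G_1\vee G_2$ of two graphs has vertex set $V(G_1)\cup V(G_2)$ (disjoint union) and edge set $E(G_1)\cup E(G_2)\cup\{uv: u\in V(G_1), v\in V(G_2)\}$. *)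

From mathcomp Require Import all_boot all_order all_algebra.
Set Implicit Arguments. Unset Strict Implicit. Unset Printing Implicit Defensive.
Import Order.TTheory GRing.Theory Num.Theory.
Local Open Scope ring_scope.

Definition simple_graph (T : finType) (e : rel T) : Prop :=
  symmetric e /\ irreflexive e.

Definition cnbhd (T : finType) (e : rel T) (x : T) : {set T} :=
  [set y | (y == x) || e x y].

Definition is_srdf (T : finType) (e : rel T) (f : T -> int) : bool :=
  [&& [forall x, f x \in [:: -1; 1; 2]],
      [forall x, 1 <= \sum_(y in cnbhd e x) f y] &
      [forall x, (f x == -1) ==> [exists y, e x y && (f y == 2)]]].

Definition weight (T : finType) (f : T -> int) : int := \sum_x f x.

Definition lab (i : 'I_3) : int := if val i == 0%N then -1 else (val i)%:Z.

(* every function V -> {-1,1,2} is lab \o g for some g : {ffun T -> 'I_3} *)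
Definition gammaSR (T : finType) (e : rel T) : int :=
  let g := Order.arg_min [ffun=> (@Ordinal 3 1 isT)]
             (fun g : {ffun T -> 'I_3} => is_srdf e (fun x => lab (g x)))
             (fun g : {ffun T -> 'I_3} => weight (fun x => lab (g x))) in
  weight (fun x => lab (g x)).

Definition join_rel (T1 T2 : finType) (e1 : rel T1) (e2 : rel T2) : rel (T1 + T2) :=
  fun a b => match a, b with
             | inl x, inl y => e1 x y
             | inr x, inr y => e2 x y
             | _, _ => true
             end.

From mathcomp Require Import all_boot all_order all_algebra.

Set Implicit Arguments.
Unset Strict Implicit.
Unset Printing Implicit Defensive.
Import Order.TTheory GRing.Theory Num.Theory.
Local Open Scope ring_scope.

(* In G \/ H every vertex of G is adjacent to all of H, so when f1 and f2 are
   minimum SRDFs of G and H, the closed-neighbourhood sums of their union on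
   G \/ H are those of f1 (or f2) plus the whole weight of the other one,
   which is nonnegative.  Hence the union is an SRDF of G \/ H of weight
   gammaSR G + gammaSR H. *)

Section SignedRomanDomination.

Variables (T : finType) (e : rel T).

Lemma eq_weight (f f' : T -> int) : f =1 f' -> weight f = weight f'.
Proof. by move=> eq_f; apply: eq_bigr. Qed.

Lemma eq_is_srdf (f f' : T -> int) : f =1 f' -> is_srdf e f = is_srdf e f'.
Proof.
move=> eq_f; rewrite /is_srdf.
congr [&& _, _ & _]; apply: eq_forallb => x.
- by rewrite eq_f.
- by under eq_bigr do rewrite eq_f.
- by under eq_existsb do rewrite eq_f; rewrite eq_f.
Qed.

Lemma is_srdf_const1 : is_srdf e (fun=> 1).
Proof.
apply/and3P; split; apply/forallP => x //.
rewrite sumr_const -mulr_natr mul1r ler1n.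
by apply/card_gt0P; exists x; rewrite inE eqxx.
Qed.

Lemma is_srdf_lab_const1 : is_srdf e (fun x => lab ([ffun=> @Ordinal 3 1 isT] x)).
Proof. by rewrite (@eq_is_srdf _ (fun=> 1)) ?is_srdf_const1 // => x; rewrite ffunE. Qed.

Lemma gammaSR_spec : exists2 f, is_srdf e f & gammaSR e = weight f.
Proof.
rewrite /gammaSR; case: arg_minP => [|g srdf_g _]; first exact: is_srdf_lab_const1.
by exists (fun x => lab (g x)).
Qed.

Lemma gammaSR_le (f : T -> int) : is_srdf e f -> gammaSR e <= weight f.
Proof.
move=> srdf_f; have /and3P[/forallP f_lab _ _] := srdf_f.
pose g := [ffun x => inord (if f x == -1 then 0%N else `|f x|%N)] : {ffun T -> 'I_3}.
have lab_g x : lab (g x) = f x.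
  by rewrite ffunE /lab; move: (f_lab x); rewrite !inE => /or3P[] /eqP->;
    rewrite /= inordK.
rewrite -(eq_weight lab_g) /gammaSR.
case: arg_minP => [|g0 _ min_g0]; first exact: is_srdf_lab_const1.
by apply: min_g0; rewrite (eq_is_srdf lab_g).
Qed.

End SignedRomanDomination.

Section Join.

Variables (T1 T2 : finType) (e1 : rel T1) (e2 : rel T2).

Definition join_fun (f1 : T1 -> int) (f2 : T2 -> int) (a : T1 + T2) : int :=
  match a with inl x => f1 x | inr y => f2 y end.

Lemma weight_join f1 f2 : weight (join_fun f1 f2) = weight f1 + weight f2.
Proof. exact: big_sumType. Qed.

Lemma cnbhd_join_suml (f : T1 + T2 -> int) x :
  \sum_(a in cnbhd (join_rel e1 e2) (inl x)) f a =
  \sum_(y in cnbhd e1 x) f (inl y) + \sum_y f (inr y).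
Proof.
by rewrite big_sumType; congr (_ + _); apply: eq_bigl => y; rewrite !inE.
Qed.

Lemma cnbhd_join_sumr (f : T1 + T2 -> int) y :
  \sum_(a in cnbhd (join_rel e1 e2) (inr y)) f a =
  \sum_x f (inl x) + \sum_(z in cnbhd e2 y) f (inr z).
Proof.
by rewrite big_sumType; congr (_ + _); apply: eq_bigl => z; rewrite !inE.
Qed.

Lemma is_srdf_join f1 f2 : is_srdf e1 f1 -> is_srdf e2 f2 ->
  0 <= weight f1 -> 0 <= weight f2 ->
  is_srdf (join_rel e1 e2) (join_fun f1 f2).
Proof.
move=> /and3P[/forallP lab1 /forallP sum1 /forallP dom1].
move=> /and3P[/forallP lab2 /forallP sum2 /forallP dom2] w1_ge0 w2_ge0.
apply/and3P; split; apply/forallP => -[x|y] /=.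
- exact: lab1.
- exact: lab2.
- by rewrite cnbhd_join_suml -[1]addr0 lerD.
- by rewrite cnbhd_join_sumr -[1]add0r lerD.
- apply/implyP => /(implyP (dom1 x))/existsP[y /andP[e1xy f1y]].
  by apply/existsP; exists (inl y); rewrite /= e1xy.
- apply/implyP => /(implyP (dom2 y))/existsP[z /andP[e2yz f2z]].
  by apply/existsP; exists (inr z); rewrite /= e2yz.
Qed.

End Join.

Theorem mainTheorem3 (T1 T2 : finType) (e1 : rel T1) (e2 : rel T2) :
  simple_graph e1 -> simple_graph e2 ->
  0 <= gammaSR e1 -> 0 <= gammaSR e2 ->
  gammaSR (join_rel e1 e2) <= gammaSR e1 + gammaSR e2.
Proof.
move=> _ _ gamma1_ge0 gamma2_ge0.
have [f1 srdf_f1 gamma1_eq] := gammaSR_spec e1.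
have [f2 srdf_f2 gamma2_eq] := gammaSR_spec e2.
rewrite gamma1_eq gamma2_eq -weight_join; apply: gammaSR_le.
by apply: is_srdf_join; rewrite -?gamma1_eq -?gamma2_eq.
Qed.
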